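(* Let $x_1,\dots,x_N\in\mathbb{R}^q$, let $d:\mathbb{R}^q\times\mathbb{R}^q\to\mathbb{R}_{\ge 0}$ be any function, and let $k:\mathbb{R}_{\ge0}\to\mathbb{R}_{\ge0}$ be convex, non-increasing and differentiable, with $g=-k'$. Set $f(x)=\sum_{i=1}^N k(d(x,x_i))$. Let $(\hat x_n)_{n\ge0}$ satisfy: $\hat x_0\in\mathbb{R}^q$ arbitrary and, for each $n$, $\hat x_{n+1}\in\operatorname{argmin}_{x\in\mathbb{R}^q}\sum_{i=1}^N g(d(\hat x_n,x_i))\,d(x,x_i)$ (assume these minimizers exist). Then the sequence $n\mapsto f(\hat x_n)$ is non-decreasing and bounded above, hence convergent. *)

From Stdlib Require Import Reals List.
Open Scope R_scope.

Definition Rq (q : nat) : Type := { v : list R | length v = q }.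

(* rsum N F = F 0 + ... + F (N-1)  (N terms; 0 if N = 0) *)
Fixpoint rsum (N : nat) (F : nat -> R) : R :=
  match N with
  | O => 0
  | S n => rsum n F + F n
  end.

Definition convex_nonneg (k : R -> R) : Prop :=
  forall x y t, 0 <= x -> 0 <= y -> 0 <= t <= 1 ->
    k (t * x + (1 - t) * y) <= t * k x + (1 - t) * k y.

Definition nonincreasing_nonneg (k : R -> R) : Prop :=
  forall x y, 0 <= x -> x <= y -> k y <= k x.

(* k is differentiable on [0, +oo) (derivative within [0,+oo), i.e. one-sided
   at 0) with derivative k' *)
Definition deriv_on_nonneg (k k' : R -> R) : Prop :=
  forall t, 0 <= t -> forall eps, 0 < eps -> exists delta, 0 < delta /\
    forall h, h <> 0 -> 0 <= t + h -> Rabs h < delta ->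
      Rabs ((k (t + h) - k t) / h - k' t) < eps.

(* Each step maximizes a minorant of f that is tight at x_n: since k is
   convex, k(t) >= k(s) - g(s) (t - s) (the tangent at s lies below k), so
   f(x) >= f(x_n) + sum_i g(d(x_n,x_i)) (d(x_n,x_i) - d(x,x_i)), and the
   choice of x_{n+1} makes the last sum non-negative at x = x_{n+1}.  Since k is
   non-increasing, f is bounded by N k(0), and the monotone bounded sequence
   f(x_n) converges. *)

From Stdlib Require Import Reals List Lra.
Open Scope R_scope.

Lemma rsum_le N F G : (forall i, F i <= G i) -> rsum N F <= rsum N G.
Proof. intros H; induction N; simpl; [lra | specialize (H N); lra]. Qed.

Lemma rsum_plus N F G : rsum N (fun i => F i + G i) = rsum N F + rsum N G.
Proof. induction N; simpl; [lra | rewrite IHN; lra]. Qed.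

Lemma rsum_minus N F G : rsum N (fun i => F i - G i) = rsum N F - rsum N G.
Proof. induction N; simpl; [lra | rewrite IHN; lra]. Qed.

Section ConvexTangent.

Variables k k' : R -> R.
Hypothesis k_convex : convex_nonneg k.
Hypothesis k_deriv : deriv_on_nonneg k k'.

Lemma convex_chord_le a b t : 0 <= a -> 0 <= b -> 0 <= t <= 1 ->
  k (a + t * (b - a)) - k a <= t * (k b - k a).
Proof.
  intros Ha Hb Ht.
  replace (a + t * (b - a)) with (t * b + (1 - t) * a) by ring.
  pose proof (k_convex b a t Hb Ha Ht); lra.
Qed.

Lemma convex_above_tangent a b : 0 <= a -> 0 <= b ->
  k a + k' a * (b - a) <= k b.
Proof.
  intros Ha Hb.
  destruct (Req_dec b a) as [-> | Hne]; [lra |].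
  apply Rnot_lt_le; intro Hlt.
  set (D := k a + k' a * (b - a) - k b).
  assert (HD : 0 < D) by (unfold D; lra).
  assert (Hba : 0 < Rabs (b - a)) by (apply Rabs_pos_lt; lra).
  destruct (k_deriv a Ha (D / (2 * Rabs (b - a)))) as [delta [Hdelta Hquot]].
  { apply Rdiv_lt_0_compat; lra. }
  (* For h = t (b - a) with t small, the difference quotient at a is within
     D / 2 of k' a, yet by convexity (times b - a) it is at most k b - k a. *)
  set (t := Rmin (1 / 2) (delta / (2 * Rabs (b - a)))).
  assert (Ht0 : 0 < t).
  { apply Rmin_glb_lt; [lra | apply Rdiv_lt_0_compat; lra]. }
  assert (Ht1 : t <= 1 / 2) by apply Rmin_l.
  assert (Ht2 : t <= delta / (2 * Rabs (b - a))) by apply Rmin_r.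
  set (h := t * (b - a)).
  assert (Hh0 : h <> 0).
  { unfold h; intro Z; apply Rmult_integral in Z; destruct Z; lra. }
  assert (Hah : 0 <= a + h).
  { replace (a + h) with ((1 - t) * a + t * b) by (unfold h; ring).
    apply Rplus_le_le_0_compat; apply Rmult_le_pos; lra. }
  assert (Hhdelta : Rabs h < delta).
  { unfold h; rewrite Rabs_mult, (Rabs_right t) by lra.
    apply Rle_lt_trans with (delta / (2 * Rabs (b - a)) * Rabs (b - a)).
    - apply Rmult_le_compat_r; [apply Rabs_pos | lra].
    - field_simplify; lra. }
  specialize (Hquot h Hh0 Hah Hhdelta).
  set (s := (k (a + h) - k a) / h) in *.
  assert (Hslope : s * (b - a) <= k b - k a).
  { replace (s * (b - a)) with ((k (a + h) - k a) / t)
      by (unfold s, h; field; lra).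
    apply Rmult_le_reg_l with t; [lra |].
    replace (t * ((k (a + h) - k a) / t)) with (k (a + h) - k a) by (field; lra).
    apply convex_chord_le; lra. }
  assert (Hclose : Rabs ((s - k' a) * (b - a)) < D / 2).
  { rewrite Rabs_mult.
    apply Rlt_le_trans with (D / (2 * Rabs (b - a)) * Rabs (b - a)).
    - apply Rmult_lt_compat_r; auto.
    - right; field; lra. }
  apply Rabs_def2 in Hclose; unfold D in *; lra.
Qed.

End ConvexTangent.

Lemma rsum_above_tangents (k g : R -> R) N (a b : nat -> R) :
  convex_nonneg k -> deriv_on_nonneg k (fun t => - g t) ->
  (forall i, 0 <= a i) -> (forall i, 0 <= b i) ->
  rsum N (fun i => k (a i))
    + (rsum N (fun i => g (a i) * a i) - rsum N (fun i => g (a i) * b i))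
  <= rsum N (fun i => k (b i)).
Proof.
  intros Hconv Hderiv Ha Hb.
  rewrite <- rsum_minus, <- rsum_plus.
  apply rsum_le; intro i.
  pose proof (convex_above_tangent k _ Hconv Hderiv (a i) (b i) (Ha i) (Hb i)).
  lra.
Qed.

Lemma rsum_nonincreasing_le_at0 (k : R -> R) N (a : nat -> R) :
  nonincreasing_nonneg k -> (forall i, 0 <= a i) ->
  rsum N (fun i => k (a i)) <= rsum N (fun _ => k 0).
Proof.
  intros Hmono Ha; apply rsum_le; intro i; apply Hmono; [lra | apply Ha].
Qed.

Theorem proposition1 (q N : nat) (xs : nat -> Rq q) (d : Rq q -> Rq q -> R)
  (k g : R -> R) (xh : nat -> Rq q)
  (Hd : forall x y, 0 <= d x y)
  (Hk0 : forall t, 0 <= t -> 0 <= k t)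
  (Hconv : convex_nonneg k)
  (Hmono : nonincreasing_nonneg k)
  (Hderiv : deriv_on_nonneg k (fun t => - g t))
  (Hstep : forall n (y : Rq q),
      rsum N (fun i => g (d (xh n) (xs i)) * d (xh (S n)) (xs i))
      <= rsum N (fun i => g (d (xh n) (xs i)) * d y (xs i))) :
  let f := fun x : Rq q => rsum N (fun i => k (d x (xs i))) in
  (forall n, f (xh n) <= f (xh (S n))) /\
  (exists M, forall n, f (xh n) <= M) /\
  (exists l, Un_cv (fun n => f (xh n)) l).
Proof.
  intros f.
  assert (Hincr : forall n, f (xh n) <= f (xh (S n))).
  { intro n.
    pose proof (Hstep n (xh n)).
    pose proof (rsum_above_tangents k g N (fun i => d (xh n) (xs i))
                  (fun i => d (xh (S n)) (xs i)) Hconv Hderiv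
                  (fun i => Hd _ _) (fun i => Hd _ _)).
    unfold f; lra. }
  assert (Hbound : forall n, f (xh n) <= rsum N (fun _ => k 0)).
  { intro n; apply rsum_nonincreasing_le_at0; [exact Hmono | intro; apply Hd]. }
  split; [exact Hincr |].
  split; [exists (rsum N (fun _ => k 0)); exact Hbound |].
  assert (Hbounded : bound (EUn (fun n => f (xh n)))).
  { exists (rsum N (fun _ => k 0)); intros x [n ->]; apply Hbound. }
  destruct (growing_cv _ Hincr Hbounded) as [l Hl]; exists l; exact Hl.
Qed.
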